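(* If $G$ is a $TR^{*}$-group, then the set $\mathrm{Tor}(G)$ of all torsion elements of $G$ is a normal subgroup of $G$.
   Context: For $g,x$ in a group, $g^{x}:=xgx^{-1}$. A non-trivial element $g$ of a group $G$ is a generalized torsion element if there exist a positive integer $n$ and $x_1,\ldots,x_n\in G$ with $g^{x_1}g^{x_2}\cdots g^{x_n}=1$. A group is a $TR^{*}$-group if every generalized torsion element of it is a torsion element. *)

From Stdlib Require Import List.
Import ListNotations.

Record Group := {
  carrier :> Type;
  gmul : carrier -> carrier -> carrier;
  gone : carrier;
  ginv : carrier -> carrier;
  gmul_assoc : forall a b c, gmul a (gmul b c) = gmul (gmul a b) c;
  gmul_1l : forall a, gmul gone a = a;
  gmul_1r : forall a, gmul a gone = a;
  gmul_Vl : forall a, gmul (ginv a) a = gone;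
  gmul_Vr : forall a, gmul a (ginv a) = gone
}.

Arguments gmul {G} : rename.
Arguments gone {G} : rename.
Arguments ginv {G} : rename.

Definition conj {G : Group} (g x : G) : G := gmul x (gmul g (ginv x)).

Fixpoint gpow {G : Group} (g : G) (n : nat) : G :=
  match n with
  | O => gone
  | S k => gmul g (gpow g k)
  end.

Definition conj_prod {G : Group} (g : G) (xs : list G) : G :=
  fold_right (fun x acc => gmul (conj g x) acc) gone xs.

Definition torsion {G : Group} (g : G) : Prop :=
  exists n : nat, 1 <= n /\ gpow g n = gone.

Definition gen_torsion {G : Group} (g : G) : Prop :=
  g <> gone /\ exists xs : list G, 1 <= length xs /\ conj_prod g xs = gone.

Definition TRstar (G : Group) : Prop :=
  forall g : G, gen_torsion g -> torsion g.

Definition is_subgroup {G : Group} (H : G -> Prop) : Prop :=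
  H gone /\ (forall a b, H a -> H b -> H (gmul a b)) /\ (forall a, H a -> H (ginv a)).

Definition is_normal_subgroup {G : Group} (H : G -> Prop) : Prop :=
  is_subgroup H /\ (forall g x, H g -> H (conj g x)).

Definition Tor (G : Group) : G -> Prop := fun g => torsion g.

(* Torsion elements are closed under inverses and conjugation in any group, so
   only closure under products needs TR*.  If a^n = b^m = 1, put c = a^-1 and
   k = nm.  The conjugates of ab by c, c^2, ..., c^k multiply to
   (c ab)^k c^-k = b^k a^k = 1, so ab is a generalized torsion element (unless
   ab = 1) and hence torsion. *)

From Stdlib Require Import List Lia Classical.
Import ListNotations.

Section GroupFacts.

Variable G : Group.
Implicit Types a b c g x y : G.

Lemma ginv_unique a b : gmul a b = gone -> b = ginv a.
Proof.
  intro Hab.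
  rewrite <- (gmul_1l G b), <- (gmul_Vl G a), <- gmul_assoc, Hab, gmul_1r.
  reflexivity.
Qed.

Lemma ginv_one : ginv (@gone G) = gone.
Proof. symmetry; apply ginv_unique, gmul_1l. Qed.

Lemma ginv_mul a b : ginv (gmul a b) = gmul (ginv b) (ginv a).
Proof.
  symmetry; apply ginv_unique.
  rewrite gmul_assoc, <- (gmul_assoc _ a b), gmul_Vr, gmul_1r, gmul_Vr.
  reflexivity.
Qed.

Lemma gmul_cancel_l c y : gmul (ginv c) (gmul c y) = y.
Proof. now rewrite gmul_assoc, gmul_Vl, gmul_1l. Qed.

Lemma conj_one x : conj (@gone G) x = gone.
Proof. unfold conj. now rewrite gmul_1l, gmul_Vr. Qed.

Lemma gpow_add g n m : gpow g (n + m) = gmul (gpow g n) (gpow g m).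
Proof.
  induction n as [|n IH]; simpl.
  - now rewrite gmul_1l.
  - now rewrite IH, gmul_assoc.
Qed.

Lemma gpow_gone n : gpow (@gone G) n = gone.
Proof. induction n as [|n IH]; simpl; [reflexivity | now rewrite IH, gmul_1l]. Qed.

Lemma gpow_mul g n m : gpow g (n * m) = gpow (gpow g n) m.
Proof.
  induction m as [|m IH]; simpl.
  - now rewrite PeanoNat.Nat.mul_0_r.
  - rewrite <- IH, <- gpow_add. f_equal. lia.
Qed.

Lemma gpow_commute g n : gmul g (gpow g n) = gmul (gpow g n) g.
Proof.
  change (gmul g (gpow g n)) with (gpow g (1 + n)).
  rewrite PeanoNat.Nat.add_comm, gpow_add. simpl. now rewrite gmul_1r.
Qed.

Lemma gpow_ginv g n : gpow (ginv g) n = ginv (gpow g n).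
Proof.
  induction n as [|n IH]; simpl.
  - now rewrite ginv_one.
  - rewrite IH, <- ginv_mul, gpow_commute. reflexivity.
Qed.

Lemma gpow_conj g x n : gpow (conj g x) n = conj (gpow g n) x.
Proof.
  unfold conj. induction n as [|n IH]; simpl.
  - now rewrite gmul_1l, gmul_Vr.
  - rewrite IH, !gmul_assoc. f_equal.
    rewrite <- !gmul_assoc. do 2 f_equal. apply gmul_cancel_l.
Qed.

Lemma conj_prod_map_mul g c xs :
  conj_prod g (map (gmul c) xs) = gmul c (gmul (conj_prod g xs) (ginv c)).
Proof.
  induction xs as [|x xs IH]; simpl.
  - now rewrite gmul_1l, gmul_Vr.
  - rewrite IH. unfold conj. rewrite ginv_mul, !gmul_assoc. f_equal.
    rewrite <- (gmul_assoc _ _ (ginv c) c), gmul_Vl, gmul_1r. reflexivity.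
Qed.

Fixpoint gpow_list c k : list G :=
  match k with
  | O => []
  | S k => c :: map (gmul c) (gpow_list c k)
  end.

Lemma length_gpow_list c k : length (gpow_list c k) = k.
Proof. induction k as [|k IH]; simpl; [reflexivity | now rewrite length_map, IH]. Qed.

Lemma conj_prod_gpow_list g c k :
  gmul (conj_prod g (gpow_list c k)) (gpow c k) = gpow (gmul c g) k.
Proof.
  induction k as [|k IH]; simpl.
  - apply gmul_1l.
  - rewrite <- IH, conj_prod_map_mul. unfold conj.
    rewrite <- !gmul_assoc, !gmul_cancel_l. reflexivity.
Qed.

Lemma torsion_gone : torsion (@gone G).
Proof. exists 1. split; [lia | apply gmul_1l]. Qed.

Lemma torsion_ginv g : torsion g -> torsion (ginv g).
Proof.
  intros [n [Hn Hg]]. exists n. split; [exact Hn|].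
  now rewrite gpow_ginv, Hg, ginv_one.
Qed.

Lemma torsion_conj g x : torsion g -> torsion (conj g x).
Proof.
  intros [n [Hn Hg]]. exists n. split; [exact Hn|].
  now rewrite gpow_conj, Hg, conj_one.
Qed.

Lemma gpow_order_mul g n k : gpow g n = gone -> gpow g (n * k) = gone.
Proof. intro Hg. now rewrite gpow_mul, Hg, gpow_gone. Qed.

Lemma conj_prod_mul_torsion a b :
  torsion a -> torsion b ->
  exists xs, 1 <= length xs /\ conj_prod (gmul a b) xs = gone.
Proof.
  intros [n [Hn Ha]] [m [Hm Hb]].
  exists (gpow_list (ginv a) (n * m)). split.
  - rewrite length_gpow_list. nia.
  - pose proof (conj_prod_gpow_list (gmul a b) (ginv a) (n * m)) as Hprod.
    rewrite gpow_ginv, gpow_order_mul, ginv_one, gmul_1r in Hprod by exact Ha.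
    rewrite Hprod, gmul_cancel_l, PeanoNat.Nat.mul_comm.
    apply gpow_order_mul, Hb.
Qed.

Lemma TRstar_torsion_of_conj_prod g :
  TRstar G -> (exists xs, 1 <= length xs /\ conj_prod g xs = gone) -> torsion g.
Proof.
  intros HTR Hprod. destruct (classic (g = gone)) as [-> | Hg].
  - apply torsion_gone.
  - apply HTR. split; assumption.
Qed.

End GroupFacts.

Theorem corollary2p2 (G : Group) : TRstar G -> is_normal_subgroup (Tor G).
Proof.
  intro HTR. unfold Tor. repeat split.
  - apply torsion_gone.
  - intros a b Ha Hb.
    apply (TRstar_torsion_of_conj_prod G _ HTR), conj_prod_mul_torsion; assumption.
  - apply torsion_ginv.
  - apply torsion_conj.
Qed.
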